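(* Let $\mathcal{JS}=(\mathcal F,\mathcal F_d,R,\mathcal B)$ be a justification system with complementary frame and consistent branch evaluation $\mathcal B$. Then for every $x\in\mathcal F_d$ and every interpretation $\mathcal I$, $$S_t(x,\mathcal I)\le_t\ \sim S_t(\sim x,\mathcal I)\qquad\text{and}\qquad S_g(x,\mathcal I)\le_t\ \sim S_g(\sim x,\mathcal I).$$
   Context: Let $\mathcal F$ be a set (fact space) containing $\mathcal L=\{\mathbf t,\mathbf f,\mathbf u\}$ with an involution $\sim$ satisfying $\sim\mathbf t=\mathbf f$, $\sim\mathbf u=\mathbf u$, $\sim x\ne x$ for $x\ne\mathbf u$; $\sim A=\{\sim a:a\in A\}$. Truth order $\mathbf f<_t\mathbf u<_t\mathbf t$; $\bigwedge,\bigvee$ are glb/lub in $(\mathcal L,\le_t)$ ($\bigvee\emptyset=\mathbf f$). A justification frame is $\mathcal{JF}=(\mathcal F,\mathcal F_d,R)$ with $\mathcal F_d\subseteq\mathcal F$, $\sim\mathcal F_d=\mathcal F_d$, $\mathcal F_d\cap\mathcal L=\emptyset$, $R\subseteq\mathcal F_d\times2^{\mathcal F}$ a set of rules $x\gets A$ with nonempty bodies, every $x\in\mathcal F_d$ heading a rule; $\mathcal F_o=\mathcal F\setminus\mathcal F_d$. A selection function for $x\in\mathcal F_d$ assigns to each body $A$ of a rule $x\gets A$ an element $s(A)\in A$; $R^*$ is the set of rules $\sim x\gets\sim\mathrm{Im}(s)$ ($x\in\mathcal F_d$, $s$ a selection function for $x$, $\mathrm{Im}(s)$ its image); the frame is complementary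 if $R^*=R$. A justification is a directed graph $(N,E)$ with labelling $\ell:N\to\mathcal F$ such that each internal node $n$ (node with an outgoing edge) has $\ell(n)\in\mathcal F_d$ and $\ell(n)\gets\{\ell(m):(n,m)\in E\}\in R$; graph-like if $\ell$ injective; tree-like if the underlying undirected graph is acyclic; locally complete if no leaf is labelled by a defined fact. A $\mathcal{JF}$-branch is an infinite sequence of defined facts or a finite sequence $x_0\to\cdots\to x_k$ ($k\ge1$) with $x_0,\dots,x_{k-1}\in\mathcal F_d$, $x_k\in\mathcal F_o$; $\sim b$ applies $\sim$ elementwise. $B_J(n)$ is the set of label sequences of maximal paths of $J$ starting at node $n$. A branch evaluation $\mathcal B$ maps $\mathcal{JF}$-branches to elements of $\mathcal F$; consistent if $\mathcal B(\sim b)=\sim\mathcal B(b)$. An interpretation is $\mathcal I:\mathcal F\to\mathcal L$ with $\mathcal I(\sim x)=\sim\mathcal I(x)$, $\mathcal I(l)=l$ on $\mathcal L$. $\mathrm{val}(J,n,\mathcal I)=\bigwedge_{b\in B_J(n)}\mathcal I(\mathcal B(b))$. For $y\in\mathcal F_d$, $S_g(y,\mathcal I)$ is the $\bigvee$ of $\mathrm{val}(J,n,\mathcal I)$ over all locally complete graph-like justifications $J$ and nodes $n$ with $\ell(n)=y$; $S_t(y,\mathcal I)$ is the same with tree-like justifications. *)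

From Stdlib Require Import List Arith ClassicalEpsilon.
Import ListNotations.

Inductive L3 : Type := Lt | Lf | Lu.

Definition negL (v : L3) : L3 :=
  match v with Lt => Lf | Lf => Lt | Lu => Lu end.

Definition rankL (v : L3) : nat := match v with Lf => 0 | Lu => 1 | Lt => 2 end.
Definition leL (a b : L3) : Prop := rankL a <= rankL b.

Definition decP (P : Prop) : bool :=
  if excluded_middle_informative P then true else false.

Definition supL (P : L3 -> Prop) : L3 :=
  if decP (P Lt) then Lt else if decP (P Lu) then Lu else Lf.
Definition infL (P : L3 -> Prop) : L3 :=
  if decP (P Lf) then Lf else if decP (P Lu) then Lu else Lt.

Record FactSpace := {
  fct :> Type;
  fneg : fct -> fct;
  fl : L3 -> fct;
  fl_inj : forall a b, fl a = fl b -> a = b;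
  fneg_invol : forall x, fneg (fneg x) = x;
  fneg_t : fneg (fl Lt) = fl Lf;
  fneg_u : fneg (fl Lu) = fl Lu;
  fneg_irr : forall x, x <> fl Lu -> fneg x <> x
}.

(* A justification frame (F, F_d, R); bodies are subsets of F (predicates). *)
Record JFrame (FS : FactSpace) := {
  Fd : FS -> Prop;
  R : FS -> (FS -> Prop) -> Prop;        (* R x A  <->  (x <- A) is a rule *)
  Fd_neg : forall x, Fd (fneg FS x) <-> Fd x;
  Fd_L : forall l, ~ Fd (fl FS l);
  R_head : forall x A, R x A -> Fd x;
  R_body_nonempty : forall x A, R x A -> exists a, A a;
  R_total : forall x, Fd x -> exists A, R x A
}.
Arguments Fd {FS}.
Arguments R {FS}.

(* R^* : rules  ~y <- ~Im(s)  for y defined and s a selection function for y *)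
Definition Rstar {FS : FactSpace} (JF : JFrame FS) (x : FS) (A : FS -> Prop) : Prop :=
  exists y, Fd JF y /\ x = fneg FS y /\
    exists s : (FS -> Prop) -> FS,
      (forall B, R JF y B -> B (s B)) /\
      A = (fun z => exists B, R JF y B /\ z = fneg FS (s B)).

Definition complementary {FS : FactSpace} (JF : JFrame FS) : Prop :=
  forall x A, R JF x A <-> Rstar JF x A.

Inductive branch (X : Type) : Type :=
  | BInf : (nat -> X) -> branch X
  | BFin : list X -> branch X.
Arguments BInf {X}.
Arguments BFin {X}.

Definition bneg {FS : FactSpace} (b : branch FS) : branch FS :=
  match b with
  | BInf s => BInf (fun i => fneg FS (s i))
  | BFin l => BFin (map (fneg FS) l)
  end.

Definition is_branch {FS : FactSpace} (JF : JFrame FS) (b : branch FS) : Prop :=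
  match b with
  | BInf s => forall i, Fd JF (s i)
  | BFin l => exists l' xk, l = l' ++ [xk] /\ l' <> [] /\
                Forall (Fd JF) l' /\ ~ Fd JF xk
  end.

(* a branch evaluation is any map B : branches -> F; consistency: *)
Definition consistent {FS : FactSpace} (JF : JFrame FS) (B : branch FS -> FS) : Prop :=
  forall b, is_branch JF b -> B (bneg b) = fneg FS (B b).

Definition interpretation {FS : FactSpace} (I : FS -> L3) : Prop :=
  (forall x, I (fneg FS x) = negL (I x)) /\ (forall l, I (fl FS l) = l).

Record justification {FS : FactSpace} (JF : JFrame FS) := {
  jN : Type;
  jE : jN -> jN -> Prop;
  jl : jN -> FS;
  j_rule : forall n, (exists m, jE n m) ->
     Fd JF (jl n) /\ R JF (jl n) (fun z => exists m, jE n m /\ jl m = z)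
}.
Arguments jN {FS JF}.
Arguments jE {FS JF}.
Arguments jl {FS JF}.

Fixpoint chain {N : Type} (E : N -> N -> Prop) (n : N) (ps : list N) : Prop :=
  match ps with
  | [] => True
  | m :: ps' => E n m /\ chain E m ps'
  end.

Definition graph_like {FS} {JF : JFrame FS} (J : justification JF) : Prop :=
  forall n m, jl J n = jl J m -> n = m.

(* underlying undirected (multi)graph is acyclic: no loops, no pair of
   opposite arcs (a 2-cycle), and no cycle through >= 3 distinct nodes *)
Definition tree_like {FS} {JF : JFrame FS} (J : justification JF) : Prop :=
  let adj := fun a b => jE J a b \/ jE J b a in
  (forall n, ~ jE J n n) /\
  (forall n m, ~ (jE J n m /\ jE J m n)) /\
  (forall n0 rest, 2 <= length rest -> NoDup (n0 :: rest) ->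
     ~ (chain adj n0 rest /\ adj (last rest n0) n0)).

Definition locally_complete {FS} {JF : JFrame FS} (J : justification JF) : Prop :=
  forall n, ~ (exists m, jE J n m) -> ~ Fd JF (jl J n).

(* b \in B_J(n): label sequence of a maximal path starting at n *)
Definition in_BJ {FS} {JF : JFrame FS} (J : justification JF) (n : jN J)
  (b : branch FS) : Prop :=
  match b with
  | BInf s => exists p : nat -> jN J, p 0 = n /\
                (forall i, jE J (p i) (p (S i))) /\ (forall i, s i = jl J (p i))
  | BFin l => exists ps : list (jN J), chain (jE J) n ps /\
                ~ (exists m, jE J (last ps n) m) /\ l = map (jl J) (n :: ps)
  end.

Definition val {FS} {JF : JFrame FS} (B : branch FS -> FS)
  (J : justification JF) (n : jN J) (I : FS -> L3) : L3 :=
  infL (fun v => exists b, in_BJ J n b /\ I (B b) = v).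

Definition S_g {FS} (JF : JFrame FS) (B : branch FS -> FS) (y : FS) (I : FS -> L3) : L3 :=
  supL (fun v => exists (J : justification JF) (n : jN J),
          locally_complete J /\ graph_like J /\ jl J n = y /\ val B J n I = v).

Definition S_t {FS} (JF : JFrame FS) (B : branch FS -> FS) (y : FS) (I : FS -> L3) : L3 :=
  supL (fun v => exists (J : justification JF) (n : jN J),
          locally_complete J /\ tree_like J /\ jl J n = y /\ val B J n I = v).

(* Let J1 be a locally complete justification with a node labelled by
   a defined fact x and J2 one with a node labelled by ~x.  The rule of J2 at
   ~x is, by complementarity, of the form ~x <- ~Im(s) for a selection
   function s for x, so whatever rule J1 uses at x, J2 has a child labelled
   by the negation of one of the children chosen in J1.  Iterating this step
   (with the axiom of choice) walks down both justifications in lockstep and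
   produces a JF-branch b starting at x in J1 whose negation ~b is a branch
   starting at ~x in J2.  Consistency of the branch evaluation then gives
   val(J1,x) <= I(B b) = ~I(B ~b) <= ~val(J2,~x).  Since S_t and S_g are
   suprema of such values, the inequality passes to them; nothing about
   tree-likeness or graph-likeness is used. *)

From Stdlib Require Import List Arith Lia Classical ClassicalEpsilon.
Import ListNotations.

Lemma fneg_inj (FS : FactSpace) (a b : FS) : fneg FS a = fneg FS b -> a = b.
Proof. intro H. rewrite <- (fneg_invol FS a), <- (fneg_invol FS b), H. reflexivity. Qed.

Lemma least_counterexample (P : nat -> Prop) n :
  ~ P n -> exists k, ~ P k /\ forall j, j < k -> P j.
Proof.
  induction n as [n IH] using lt_wf_ind. intro Hn.
  destruct (classic (forall j, j < n -> P j)) as [Hbelow|Hbelow].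
  - exists n. auto.
  - apply not_all_ex_not in Hbelow as [j Hj].
    apply imply_to_and in Hj as [Hjn HPj]. exact (IH j Hjn HPj).
Qed.

Lemma last_cons_default {N} (x d : N) l : last (x :: l) d = last l x.
Proof.
  revert x; induction l as [|y l IH]; intros x; [reflexivity|].
  simpl. destruct l; [reflexivity|]. apply IH.
Qed.

Section Paths.
Context {FS : FactSpace} {JF : JFrame FS} (J : justification JF).

Lemma internal_defined n m : jE J n m -> Fd JF (jl J n).
Proof. intro E. exact (proj1 (j_rule _ J n (ex_intro _ m E))). Qed.

Lemma defined_internal n :
  locally_complete J -> Fd JF (jl J n) -> exists m, jE J n m.
Proof. intros Hlc Hd. apply NNPP. intro Hleaf. exact (Hlc n Hleaf Hd). Qed.

Lemma chain_seq (p : nat -> jN J) k : forall a,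
  (forall j, a <= j < a + k -> jE J (p j) (p (S j))) ->
  chain (jE J) (p a) (map p (seq (S a) k)).
Proof.
  induction k as [|k IH]; intros a Hstep; simpl; [exact I|].
  split; [apply Hstep; lia|]. apply IH. intros j Hj. apply Hstep. lia.
Qed.

Lemma last_seq (p : nat -> jN J) k : forall a,
  last (map p (seq (S a) k)) (p a) = p (a + k).
Proof.
  induction k as [|k IH]; intros a; [simpl; f_equal; lia|].
  change (last (p (S a) :: map p (seq (S (S a)) k)) (p a) = p (a + S k)).
  rewrite last_cons_default, IH. f_equal. lia.
Qed.

Lemma infinite_path_in_BJ (p : nat -> jN J) (s : nat -> FS) :
  (forall i, jE J (p i) (p (S i))) -> (forall i, s i = jl J (p i)) ->
  in_BJ J (p 0) (BInf s).
Proof. intros Hstep Hlab. exists p. auto. Qed.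

Lemma finite_path_in_BJ (p : nat -> jN J) k :
  (forall j, j < k -> jE J (p j) (p (S j))) -> ~ (exists m, jE J (p k) m) ->
  in_BJ J (p 0) (BFin (map (fun i => jl J (p i)) (seq 0 (S k)))).
Proof.
  intros Hstep Hleaf. exists (map p (seq 1 k)). split; [|split].
  - apply (chain_seq p k 0). intros j Hj. apply Hstep. lia.
  - rewrite (last_seq p k 0). exact Hleaf.
  - simpl. rewrite map_map. reflexivity.
Qed.
End Paths.

Section LockstepWalk.
Context {FS : FactSpace} {JF : JFrame FS} (Hcompl : complementary JF).
Variables (J1 J2 : justification JF).
Hypotheses (L1 : locally_complete J1) (L2 : locally_complete J2).

Definition opposite (a : jN J1) (b : jN J2) : Prop :=
  jl J2 b = fneg FS (jl J1 a).

(* The one-step argument: complementarity lets J2 follow any rule of J1. *)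
Lemma opposite_step a b :
  opposite a b -> Fd JF (jl J1 a) ->
  exists a' b', jE J1 a a' /\ jE J2 b b' /\ opposite a' b'.
Proof.
  intros Hopp Ha.
  assert (Hb : Fd JF (jl J2 b)) by (rewrite Hopp; apply Fd_neg; exact Ha).
  destruct (j_rule _ J1 a (defined_internal J1 a L1 Ha)) as [_ Rule1].
  destruct (j_rule _ J2 b (defined_internal J2 b L2 Hb)) as [_ Rule2].
  apply Hcompl in Rule2 as [y [_ [Hy [s [Hsel Hbody]]]]].
  rewrite Hopp in Hy. apply fneg_inj in Hy. subst y.
  set (A1 := fun z => exists m, jE J1 a m /\ jl J1 m = z) in *.
  destruct (Hsel A1 Rule1) as [a' [E1 La']].
  assert (Hchild : exists m, jE J2 b m /\ jl J2 m = fneg FS (s A1)).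
  { change ((fun z => exists m, jE J2 b m /\ jl J2 m = z) (fneg FS (s A1))).
    rewrite Hbody. exists A1. split; [exact Rule1|reflexivity]. }
  destruct Hchild as [b' [E2 Lb']].
  exists a', b'. unfold opposite. rewrite Lb', La'. auto.
Qed.

Lemma opposite_walk n1 n2 :
  opposite n1 n2 ->
  exists (p1 : nat -> jN J1) (p2 : nat -> jN J2),
    p1 0 = n1 /\ p2 0 = n2 /\ (forall i, opposite (p1 i) (p2 i)) /\
    (forall i, Fd JF (jl J1 (p1 i)) ->
       jE J1 (p1 i) (p1 (S i)) /\ jE J2 (p2 i) (p2 (S i))).
Proof.
  intro H0.
  set (next := fun (q q' : jN J1 * jN J2) =>
    opposite (fst q) (snd q) -> opposite (fst q') (snd q') /\
    (Fd JF (jl J1 (fst q)) -> jE J1 (fst q) (fst q') /\ jE J2 (snd q) (snd q'))).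
  assert (Htotal : forall q, exists q', next q q').
  { intros [a b]. unfold next; simpl.
    destruct (classic (opposite a b /\ Fd JF (jl J1 a))) as [[Hopp Ha]|Hnot].
    - destruct (opposite_step a b Hopp Ha) as [a' [b' [E1 [E2 Hopp']]]].
      exists (a', b'). auto.
    - exists (a, b). intro Hopp. split; [exact Hopp|]. intro Ha. tauto. }
  destruct (choice next Htotal) as [f Hf].
  set (q := fun i => Nat.iter i f (n1, n2)).
  assert (Hopp : forall i, opposite (fst (q i)) (snd (q i))).
  { induction i as [|i IH]; [exact H0|]. exact (proj1 (Hf (q i) IH)). }
  exists (fun i => fst (q i)), (fun i => snd (q i)).
  split; [reflexivity|split; [reflexivity|split; [exact Hopp|]]].
  intros i Hd. exact (proj2 (Hf (q i) (Hopp i)) Hd).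
Qed.

Lemma paired_branch n1 n2 :
  Fd JF (jl J1 n1) -> opposite n1 n2 ->
  exists b, is_branch JF b /\ in_BJ J1 n1 b /\ in_BJ J2 n2 (bneg b).
Proof.
  intros Hd H0.
  destruct (opposite_walk n1 n2 H0) as [p1 [p2 [<- [<- [Hopp Hstep]]]]].
  assert (Hlab : forall i, fneg FS (jl J1 (p1 i)) = jl J2 (p2 i))
    by (intro i; symmetry; apply Hopp).
  destruct (classic (forall i, Fd JF (jl J1 (p1 i)))) as [Hall|Hsome].
  - exists (BInf (fun i => jl J1 (p1 i))). split; [exact Hall|split].
    + apply infinite_path_in_BJ; [|reflexivity]. intro i. apply Hstep, Hall.
    + apply infinite_path_in_BJ; [|exact Hlab]. intro i. apply Hstep, Hall.
  - apply not_all_ex_not in Hsome as [n Hn].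
    destruct (least_counterexample (fun i => Fd JF (jl J1 (p1 i))) n Hn) as [k [Hk Hbelow]].
    assert (Hk0 : k <> 0) by (intros ->; contradiction).
    exists (BFin (map (fun i => jl J1 (p1 i)) (seq 0 (S k)))). split; [|split].
    + exists (map (fun i => jl J1 (p1 i)) (seq 0 k)), (jl J1 (p1 k)).
      split; [rewrite seq_S, map_app; reflexivity|].
      split; [destruct k; [lia|discriminate]|].
      split; [|exact Hk].
      apply Forall_forall. intros x Hx. apply in_map_iff in Hx as [j [<- Hj]].
      apply in_seq in Hj. apply Hbelow. lia.
    + apply finite_path_in_BJ.
      * intros j Hj. apply Hstep, Hbelow, Hj.
      * intros [m Hm]. exact (Hk (internal_defined J1 _ _ Hm)).
    + cbn [bneg]. rewrite map_map, (map_ext _ _ Hlab).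
      apply finite_path_in_BJ.
      * intros j Hj. apply Hstep, Hbelow, Hj.
      * intros [m Hm]. apply Hk, Fd_neg. rewrite <- Hopp.
        exact (internal_defined J2 _ _ Hm).
Qed.
End LockstepWalk.

Lemma rank_negL v : rankL (negL v) = 2 - rankL v.
Proof. destruct v; reflexivity. Qed.

Lemma infL_le (P : L3 -> Prop) v : P v -> leL (infL P) v.
Proof.
  intro Hv. unfold infL, leL, decP.
  destruct (excluded_middle_informative (P Lf)); simpl; [lia|].
  destruct (excluded_middle_informative (P Lu)); simpl;
    destruct v; simpl; try lia; contradiction.
Qed.

Lemma supL_cases (P : L3 -> Prop) : supL P = Lf \/ P (supL P).
Proof.
  unfold supL, decP.
  destruct (excluded_middle_informative (P Lt)); auto.
  destruct (excluded_middle_informative (P Lu)); auto.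
Qed.

Lemma supL_le_neg_supL (P Q : L3 -> Prop) :
  (forall v w, P v -> Q w -> rankL v + rankL w <= 2) ->
  leL (supL P) (negL (supL Q)).
Proof.
  intro Hpair. unfold leL. rewrite rank_negL.
  destruct (supL_cases P) as [->|HP]; [simpl; lia|].
  destruct (supL_cases Q) as [->|HQ]; [simpl; destruct (supL P); simpl; lia|].
  specialize (Hpair _ _ HP HQ). lia.
Qed.

Lemma val_opposite {FS : FactSpace} (JF : JFrame FS) (B : branch FS -> FS)
  (Hcompl : complementary JF) (Hcons : consistent JF B) (I : FS -> L3)
  (HI : forall x, I (fneg FS x) = negL (I x))
  (J1 J2 : justification JF) n1 n2 :
  locally_complete J1 -> locally_complete J2 ->
  Fd JF (jl J1 n1) -> jl J2 n2 = fneg FS (jl J1 n1) ->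
  rankL (val B J1 n1 I) + rankL (val B J2 n2 I) <= 2.
Proof.
  intros L1 L2 Hd Hopp.
  destruct (paired_branch Hcompl J1 J2 L1 L2 n1 n2 Hd Hopp) as [b [Hb [In1 In2]]].
  assert (V1 : leL (val B J1 n1 I) (I (B b))) by (apply infL_le; eauto).
  assert (V2 : leL (val B J2 n2 I) (I (B (bneg b)))) by (apply infL_le; eauto).
  rewrite (Hcons b Hb), HI in V2. unfold leL in *. rewrite rank_negL in V2.
  destruct (I (B b)); simpl in *; lia.
Qed.

Theorem mainTheorem11 (FS : FactSpace) (JF : JFrame FS) (B : branch FS -> FS)
  (Hcompl : complementary JF) (Hcons : consistent JF B) :
  forall (x : FS) (I : FS -> L3), Fd JF x -> interpretation I ->
    leL (S_t JF B x I) (negL (S_t JF B (fneg FS x) I)) /\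
    leL (S_g JF B x I) (negL (S_g JF B (fneg FS x) I)).
Proof.
  intros x I Hx [HI _].
  split; apply supL_le_neg_supL;
    intros v w [J1 [n1 [L1 [_ [E1 <-]]]]] [J2 [n2 [L2 [_ [E2 <-]]]]];
    subst x; exact (val_opposite JF B Hcompl Hcons I HI J1 J2 n1 n2 L1 L2 Hx E2).
Qed.
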